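(* Let $0<\sigma\le 1$ and let $(u,m)$ be the classical solution of the system \[ \begin{cases} u_t + \frac{\sigma^2}{2} u_{xx} - ru + G(u_x,m)^2 = 0, & 0<t<T,\ 0<x<L,\\ m_t - \frac{\sigma^2}{2} m_{xx} - \{G(u_x,m)m\}_x = 0, & 0<t<T,\ 0<x<L,\\ m(0,x)=m_0(x),\quad u(T,x)=u_T(x), & 0\le x\le L,\\ u_x(t,0)=u_x(t,L)=0, & 0\le t\le T,\\ \frac{\sigma^2}{2} m_x(t,x) + G(u_x,m)m(t,x) = 0, & 0\le t\le T,\ x\in\{0,L\}, \end{cases} \] where $G(u_x,m)(t,x) := \frac12\left(b + c\int_0^L u_x(t,y)m(t,y)\,dy - u_x(t,x)\right)$. Then \[ \sigma^2\left(\int_0^T\!\!\int_0^L \frac{|m_x|^2}{m+1}\,dx\,dt\right)^{1/2}\le C, \] where $C$ does not depend on $\sigma$.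
   Context: Standing setting: $L,T,r>0$ are constants, $\epsilon>0$, and $b=\frac{2}{2+\epsilon}$, $c=\frac{\epsilon}{2+\epsilon}$. The data satisfy: $u_T,m_0\in C^{2+\gamma}([0,L])$ for some $\gamma>0$; $u_T'(0)=u_T'(L)=0$ and $m_0(0)=m_0'(0)=m_0(L)=m_0'(L)=0$; $m_0$ is a probability density on $[0,L]$; $u_T\ge 0$. Constants may depend on $u_T,m_0,L,T,r,\epsilon$ but not on $\sigma\in(0,1]$. *)

From Stdlib Require Import Reals.
From Coquelicot Require Export Coquelicot.
Open Scope R_scope.

Definition Icl (L x : R) : Prop := 0 <= x <= L.
Definition Iop (L x : R) : Prop := 0 < x < L.

Definition Rcl (T L : R) (p : R * R) : Prop := Icl T (fst p) /\ Icl L (snd p).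
Definition Rop (T L : R) (p : R * R) : Prop := Iop T (fst p) /\ Iop L (snd p).

Definition uncurry2 (f : R -> R -> R) : R * R -> R := fun p => f (fst p) (snd p).

(* f belongs to C^{2+gamma}([0,L]): f, f', f'' continuous on [0,L]
   (f', f'' being the derivatives on (0,L), extended continuously to [0,L]),
   and f'' is gamma-Hoelder on [0,L].  d1, d2 are f', f''. *)
Definition C2g (L gamma : R) (f d1 d2 : R -> R) : Prop :=
  continuous_on (Icl L) f /\ continuous_on (Icl L) d1 /\ continuous_on (Icl L) d2 /\
  (forall x, Iop L x -> is_derive f x (d1 x)) /\
  (forall x, Iop L x -> is_derive d1 x (d2 x)) /\
  exists K, forall x y, Icl L x -> Icl L y ->
    Rabs (d2 x - d2 y) <= K * Rpower (Rabs (x - y)) gamma.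

Definition Gfun (b c L : R) (ux m : R -> R -> R) (t x : R) : R :=
  / 2 * (b + c * RInt (fun y => ux t y * m t y) 0 L - ux t x).

(* (u, m) is a classical solution of the MFG system; ut, ux, uxx, mt, mx, mxx
   are its partial derivatives (on the interior, extended by continuity). *)
Definition classical_solution (sigma r b c T L : R) (uT m0 : R -> R)
    (u ut ux uxx m mt mx mxx : R -> R -> R) : Prop :=
  continuous_on (Rcl T L) (uncurry2 u) /\ continuous_on (Rcl T L) (uncurry2 m) /\
  continuous_on (Rcl T L) (uncurry2 ux) /\ continuous_on (Rcl T L) (uncurry2 mx) /\
  continuous_on (Rop T L) (uncurry2 ut) /\ continuous_on (Rop T L) (uncurry2 uxx) /\
  continuous_on (Rop T L) (uncurry2 mt) /\ continuous_on (Rop T L) (uncurry2 mxx) /\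
  (forall t x, Icl T t -> Iop L x ->
     is_derive (fun y => u t y) x (ux t x) /\ is_derive (fun y => m t y) x (mx t x)) /\
  (forall t x, Iop T t -> Iop L x ->
     is_derive (fun s => u s x) t (ut t x) /\ is_derive (fun s => m s x) t (mt t x) /\
     is_derive (fun y => ux t y) x (uxx t x) /\ is_derive (fun y => mx t y) x (mxx t x)) /\
  (forall t x, Iop T t -> Iop L x ->
     ut t x + sigma ^ 2 / 2 * uxx t x - r * u t x + (Gfun b c L ux m t x) ^ 2 = 0) /\
  (forall t x, Iop T t -> Iop L x ->
     is_derive (fun y => Gfun b c L ux m t y * m t y) x
       (mt t x - sigma ^ 2 / 2 * mxx t x)) /\
  (forall x, Icl L x -> m 0 x = m0 x /\ u T x = uT x) /\
  (forall t, Icl T t -> ux t 0 = 0 /\ ux t L = 0) /\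
  (forall t x, Icl T t -> (x = 0 \/ x = L) ->
     sigma ^ 2 / 2 * mx t x + Gfun b c L ux m t x * m t x = 0).

(* The bound comes from the entropy identity for the Fokker-Planck equation.  With
   Psi s = (s + 1) ln (s + 1) - s, testing the equation against ln (m + 1) gives
     d/dt int Psi(m) = - int m_x / (m + 1) * (sigma^2/2 m_x + G m),
   and completing the square bounds sigma^4/4 int int m_x^2 / (m + 1) by int Psi(m0) plus
   int int G^2 m.  The latter is controlled uniformly in sigma by duality: computing
   d/dt int u m from both equations, and writing u_x = b + c A - 2 G with A = int u_x m,
   gives int int G^2 m <= int u_T m(T) + T b / (8 c) <= max u_T + T b / (8 c), since m stays
   a probability density and u >= 0.  Nonnegativity of m and u follows from the same kind
   of identity for the fourth power of their negative parts, with a Gronwall weight for m.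
   Every identity used is an instance of one conservation law, d/dt int E = int S whenever
   E_t = F_x + S and F vanishes at x = 0 and x = L. *)

From Stdlib Require Import Reals Lra Lia.
From Coquelicot Require Import Coquelicot.
Open Scope R_scope.

Lemma Rabs_le_bounds x y : Rabs x <= y -> - y <= x <= y.
Proof. unfold Rabs; destruct Rcase_abs; lra. Qed.

Lemma eq_0_of_Rabs_le_eps D K :
  0 <= K -> (forall eps, 0 < eps -> Rabs D <= eps * K) -> D = 0.
Proof.
intros HK H; destruct (Req_dec D 0) as [|Hn]; auto; exfalso.
assert (HD : 0 < Rabs D) by (apply Rabs_pos_lt; auto).
specialize (H (Rabs D / (2 * (K + 1))) ltac:(apply Rdiv_lt_0_compat; lra)).
assert (Hlt : K / (2 * (K + 1)) < 1).
{ apply (Rmult_lt_reg_r (2 * (K + 1))); [lra|].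
  unfold Rdiv; rewrite Rmult_assoc, Rinv_l by lra; lra. }
assert (0 <= K / (2 * (K + 1))) by (apply Rdiv_le_0_compat; lra).
replace (Rabs D / (2 * (K + 1)) * K) with (Rabs D * (K / (2 * (K + 1)))) in H
  by (field; lra).
nra.
Qed.

Lemma ball_R (x e y : R) : ball x e y <-> Rabs (y - x) < e.
Proof. reflexivity. Qed.

Lemma ball_R2 (p q : R * R) e :
  ball p e q <-> Rabs (fst q - fst p) < e /\ Rabs (snd q - snd p) < e.
Proof. destruct p, q; reflexivity. Qed.

Definition clip (a b x : R) := Rmax a (Rmin b x).

Lemma clip_in a b x : a <= b -> a <= clip a b x <= b.
Proof. intros; unfold clip, Rmax, Rmin; repeat destruct Rle_dec; lra. Qed.

Lemma clip_id a b x : a <= x <= b -> clip a b x = x.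
Proof. intros; unfold clip, Rmax, Rmin; repeat destruct Rle_dec; lra. Qed.

Lemma Rabs_clip_le a b x y : a <= b -> Rabs (clip a b x - clip a b y) <= Rabs (x - y).
Proof.
intros; unfold clip, Rmax, Rmin; repeat destruct Rle_dec;
  unfold Rabs; repeat destruct Rcase_abs; lra.
Qed.

Definition unif_cont_on (a b : R) (h : R -> R) : Prop :=
  forall eps, 0 < eps -> exists d, 0 < d /\ forall s s',
    a <= s <= b -> a <= s' <= b -> Rabs (s - s') < d -> Rabs (h s - h s') < eps.

Lemma continuous_clip_unif_cont a b h s :
  a <= b -> unif_cont_on a b h -> continuous (fun s => h (clip a b s)) s.
Proof.
intros Hab H; apply filterlim_locally; intros e.
destruct (H e (cond_pos e)) as [d [Hd Hh]].
exists (mkposreal d Hd); intros y Hy; apply ball_R in Hy; apply ball_R.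
apply Hh; try (apply clip_in; lra).
eapply Rle_lt_trans; [apply Rabs_clip_le; lra | exact Hy].
Qed.

Lemma continuous_clip_pt a b h s :
  a <= b -> (forall y, continuity_pt h y) -> continuous (fun s => h (clip a b s)) s.
Proof.
intros Hab Hh; apply continuity_pt_filterlim.
apply continuity_pt_comp with (f1 := clip a b); [|apply Hh].
intros e He; exists e; split; [exact He|]; intros y [_ Hy].
eapply Rle_lt_trans; [apply Rabs_clip_le; lra | exact Hy].
Qed.

Lemma ex_RInt_unif_cont_on a b h c d :
  a <= b -> unif_cont_on a b h -> a <= c <= b -> a <= d <= b -> ex_RInt h c d.
Proof.
intros Hab H Hc Hd.
apply ex_RInt_ext with (fun s => h (clip a b s)).
- intros x Hx; rewrite clip_id; [reflexivity|].
  unfold Rmin, Rmax in Hx; destruct Rle_dec in Hx; lra.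
- apply (ex_RInt_continuous (V := R_CompleteNormedModule)); intros.
  apply continuous_clip_unif_cont; auto.
Qed.

Lemma continuous_unif_cont_on_interior a b h s :
  unif_cont_on a b h -> a < s < b -> continuous h s.
Proof.
intros H Hs; apply continuous_ext_loc with (fun s => h (clip a b s)).
- assert (Hd : 0 < Rmin (s - a) (b - s)) by (apply Rmin_pos; lra).
  exists (mkposreal _ Hd); intros y Hy.
  change (Rabs (y - s) < Rmin (s - a) (b - s)) in Hy; apply Rabs_def2 in Hy.
  pose proof (Rmin_l (s - a) (b - s)); pose proof (Rmin_r (s - a) (b - s)).
  rewrite clip_id; [reflexivity | lra].
- apply continuous_clip_unif_cont; auto; lra.
Qed.

Lemma unif_cont_step_bound (h : R -> R) a b d :
  0 < d ->
  (forall s s', a <= s <= b -> a <= s' <= b -> Rabs (s - s') < d -> Rabs (h s - h s') < 1) ->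
  forall n x, a <= x <= b -> x - a <= INR n * (d / 2) -> Rabs (h x - h a) <= INR n.
Proof.
intros Hd Hh n; induction n as [|n IH]; intros x Hx Hn.
- simpl in *; replace x with a by lra; rewrite Rminus_diag, Rabs_R0; lra.
- rewrite S_INR in *; pose proof (pos_INR n).
  set (y := Rmax a (x - d / 2)).
  assert (Hy : a <= y <= x) by (unfold y, Rmax; destruct Rle_dec; lra).
  assert (Hyn : y - a <= INR n * (d / 2)) by (unfold y, Rmax; destruct Rle_dec; nra).
  assert (Hxy : Rabs (x - y) < d).
  { rewrite Rabs_pos_eq by lra; unfold y, Rmax; destruct Rle_dec; lra. }
  specialize (IH y ltac:(lra) Hyn); specialize (Hh x y Hx ltac:(lra) Hxy).
  replace (h x - h a) with ((h x - h y) + (h y - h a)) by ring.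
  eapply Rle_trans; [apply Rabs_triang | lra].
Qed.

Lemma unif_cont_on_minus a b g h :
  unif_cont_on a b g -> unif_cont_on a b h -> unif_cont_on a b (fun s => g s - h s).
Proof.
intros Hg Hh e He.
destruct (Hg (e / 2) ltac:(lra)) as [d1 [Hd1 H1]].
destruct (Hh (e / 2) ltac:(lra)) as [d2 [Hd2 H2]].
exists (Rmin d1 d2); split; [apply Rmin_pos; auto|]; intros s s' Hs Hs' Hss.
pose proof (Rmin_l d1 d2); pose proof (Rmin_r d1 d2).
specialize (H1 s s' Hs Hs' ltac:(lra)); specialize (H2 s s' Hs Hs' ltac:(lra)).
replace (g s - h s - (g s' - h s')) with ((g s - g s') - (h s - h s')) by ring.
eapply Rle_lt_trans; [apply Rabs_triang|]; rewrite Rabs_Ropp; lra.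
Qed.

Lemma unif_cont_on_const a b h :
  a < b -> unif_cont_on a b h -> (forall s s', a < s < b -> a < s' < b -> h s = h s') ->
  forall s s', a <= s <= b -> a <= s' <= b -> h s = h s'.
Proof.
intros Hab Hu Hc.
set (c := (a + b) / 2).
assert (Hs : forall s, a <= s <= b -> h s = h c).
{ intros s Hs; apply Rminus_diag_uniq, (eq_0_of_Rabs_le_eps _ 1); [lra|].
  intros e He; destruct (Hu e He) as [d [Hd Hh]].
  set (lam := Rmin (1 / 2) (d / (b - a))).
  assert (Hl0 : 0 < lam) by (apply Rmin_pos; [lra | apply Rdiv_lt_0_compat; lra]).
  assert (Hl1 : lam <= 1 / 2) by apply Rmin_l.
  assert (Hl2 : lam * (b - a) <= d).
  { apply (Rmult_le_reg_r (/ (b - a))); [apply Rinv_0_lt_compat; lra|].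
    rewrite Rmult_assoc, Rinv_r, Rmult_1_r by lra; apply Rmin_r. }
  set (s'' := s + lam * (c - s)).
  assert (Hin : a < s'' < b) by (unfold s'', c; split; nra).
  rewrite (Hc c s'' ltac:(unfold c; lra) Hin).
  rewrite Rmult_1_r; left; apply Hh; [lra | lra |].
  unfold s''; replace (s - (s + lam * (c - s))) with (- (lam * (c - s))) by ring.
  rewrite Rabs_Ropp, Rabs_mult, Rabs_pos_eq by lra.
  apply Rle_lt_trans with (lam * ((b - a) / 2)).
  - apply Rmult_le_compat_l; [lra|]; apply Rabs_le; unfold c; lra.
  - nra. }
intros s s' H1 H2; rewrite (Hs s H1), (Hs s' H2); reflexivity.
Qed.

Lemma RInt_const_R (k p q : R) : RInt (fun _ => k) p q = (q - p) * k.
Proof. rewrite RInt_const; reflexivity. Qed.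

Lemma RInt_iter_zero (p q a b : R) : RInt (fun _ => RInt (fun _ => 0) p q) a b = 0.
Proof. rewrite (RInt_const_R 0 p q), Rmult_0_r, RInt_const_R; apply Rmult_0_r. Qed.

Lemma Rabs_RInt_le_const h c d M : ex_RInt h c d ->
  (forall s, Rmin c d <= s <= Rmax c d -> Rabs (h s) <= M) ->
  Rabs (RInt h c d) <= Rabs (d - c) * M.
Proof.
intros Hi Hb; destruct (Rle_dec c d) as [Hcd|Hcd].
- rewrite (Rabs_pos_eq (d - c)) by lra; apply abs_RInt_le_const; auto.
  intros s Hs; apply Hb; unfold Rmin, Rmax; destruct Rle_dec; lra.
- rewrite <- (opp_RInt_swap (V := R_CompleteNormedModule)) by (apply ex_RInt_swap; auto).
  rewrite (Rabs_left1 (d - c)) by lra; unfold opp; simpl; rewrite Rabs_Ropp.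
  replace (- (d - c)) with (c - d) by ring.
  apply abs_RInt_le_const; [lra | apply ex_RInt_swap; auto|].
  intros s Hs; apply Hb; unfold Rmin, Rmax; destruct Rle_dec; lra.
Qed.

Lemma unif_cont_on_RInt_upper a b (H : R -> R) M :
  (forall s s', a <= s <= b -> a <= s' <= b -> ex_RInt H s s') ->
  (forall s, a <= s <= b -> Rabs (H s) <= M) ->
  unif_cont_on a b (fun s => RInt H a s).
Proof.
intros HI HM e He.
assert (HM1 : 0 < Rabs M + 1) by (pose proof (Rabs_pos M); lra).
exists (e / (Rabs M + 1)); split; [apply Rdiv_lt_0_compat; lra|]; intros s s' Hs Hs' Hss.
pose proof (RInt_Chasles (V := R_CompleteNormedModule) H a s' s) as C.
unfold plus in C; simpl in C; rewrite <- C by (apply HI; lra).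
rewrite Rplus_minus_l.
eapply Rle_lt_trans.
- apply Rabs_RInt_le_const with (M := Rabs M); [apply HI; lra|].
  intros y Hy; eapply Rle_trans; [apply HM | apply Rle_abs].
  unfold Rmin, Rmax in Hy; destruct Rle_dec in Hy; lra.
- apply (Rmult_lt_compat_r (Rabs M + 1)) in Hss; [|lra].
  unfold Rdiv in Hss; rewrite Rmult_assoc, Rinv_l, Rmult_1_r in Hss by lra.
  pose proof (Rabs_pos (s - s')); pose proof (Rabs_pos M); nra.
Qed.

Lemma RInt_tails_le h L a M :
  unif_cont_on 0 L h -> (forall x, 0 <= x <= L -> Rabs (h x) <= M) -> 0 <= a -> 2 * a <= L ->
  Rabs (RInt h 0 L - RInt h a (L - a)) <= 2 * a * M.
Proof.
intros Hu HM Ha HaL.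
assert (I : forall c d, 0 <= c <= L -> 0 <= d <= L -> ex_RInt h c d)
  by (intros; apply (ex_RInt_unif_cont_on 0 L); auto; lra).
pose proof (RInt_Chasles (V := R_CompleteNormedModule) h 0 a L) as C1.
pose proof (RInt_Chasles (V := R_CompleteNormedModule) h a (L - a) L) as C2.
unfold plus in C1, C2; simpl in C1, C2.
rewrite <- C1, <- C2 by (apply I; lra).
replace (RInt h 0 a + (RInt h a (L - a) + RInt h (L - a) L) - RInt h a (L - a))
  with (RInt h 0 a + RInt h (L - a) L) by ring.
assert (B1 : Rabs (RInt h 0 a) <= (a - 0) * M).
{ apply abs_RInt_le_const; [lra | apply I; lra | intros; apply HM; lra]. }
assert (B2 : Rabs (RInt h (L - a) L) <= (L - (L - a)) * M).
{ apply abs_RInt_le_const; [lra | apply I; lra | intros; apply HM; lra]. }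
eapply Rle_trans; [apply Rabs_triang | lra].
Qed.

Lemma RInt_nonneg_eq_0 L g : 0 < L -> unif_cont_on 0 L g ->
  (forall x, 0 <= x <= L -> 0 <= g x) -> RInt g 0 L <= 0 -> forall x, 0 <= x <= L -> g x = 0.
Proof.
intros HL Hu Hp Hi x0 Hx0.
destruct (Rle_lt_or_eq_dec 0 (g x0) (Hp x0 Hx0)) as [Hg|Hg]; [exfalso | auto].
destruct (Hu (g x0 / 2) ltac:(lra)) as [d [Hd Hdd]].
set (p := Rmax 0 (x0 - d / 2)); set (q := Rmin L (x0 + d / 2)).
assert (Hp0 : 0 <= p) by apply Rmax_l.
assert (HqL : q <= L) by apply Rmin_l.
assert (Hpq : p < q) by (unfold p, q, Rmax, Rmin; repeat destruct Rle_dec; lra).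
assert (Hpx : x0 - d / 2 <= p) by apply Rmax_r.
assert (Hqx : q <= x0 + d / 2) by apply Rmin_r.
assert (I : forall c d, 0 <= c <= L -> 0 <= d <= L -> ex_RInt g c d)
  by (intros; apply (ex_RInt_unif_cont_on 0 L); auto; lra).
pose proof (RInt_Chasles (V := R_CompleteNormedModule) g 0 p L) as C1.
pose proof (RInt_Chasles (V := R_CompleteNormedModule) g p q L) as C2.
unfold plus in C1, C2; simpl in C1, C2.
rewrite <- C1, <- C2 in Hi by (apply I; lra).
assert (B1 : 0 <= RInt g 0 p) by (apply RInt_ge_0; auto; [apply I; lra | intros; apply Hp; lra]).
assert (B3 : 0 <= RInt g q L) by (apply RInt_ge_0; auto; [apply I; lra | intros; apply Hp; lra]).
assert (B2 : RInt (fun _ => g x0 / 2) p q <= RInt g p q).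
{ apply RInt_le; [lra | apply ex_RInt_const | apply I; lra|].
  intros y Hy; left.
  assert (Hy' : Rabs (y - x0) < d) by (apply Rabs_def1; lra).
  specialize (Hdd y x0 ltac:(lra) Hx0 Hy'); apply Rabs_def2 in Hdd; lra. }
rewrite RInt_const_R in B2.
assert (0 < (q - p) * (g x0 / 2)) by (apply Rmult_lt_0_compat; lra).
lra.
Qed.

Lemma is_derive_eq (f : R -> R) (x a b : R) : is_derive f x a -> a = b -> is_derive f x b.
Proof. intros H <-; exact H. Qed.

Lemma is_derive_Rmult (f g : R -> R) x a b : is_derive f x a -> is_derive g x b ->
  is_derive (fun y => f y * g y) x (a * g x + f x * b).
Proof. intros; apply (is_derive_mult f g); auto; intros; apply Rmult_comm. Qed.

Lemma is_derive_Rcomp (p f : R -> R) x dp a : is_derive p (f x) dp -> is_derive f x a ->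
  is_derive (fun y => p (f y)) x (dp * a).
Proof. intros H1 H2; rewrite Rmult_comm; apply (is_derive_comp p f x dp a H1 H2). Qed.

Lemma is_derive_continuity_pt (f : R -> R) x l : is_derive f x l -> continuity_pt f x.
Proof. intros H; apply derivable_continuous_pt; exists l; apply is_derive_Reals, H. Qed.

Definition neg (s : R) := Rmin s 0.

Lemma Rabs_neg_pow_le (k : nat) h : (2 <= k)%nat -> Rabs h <= 1 ->
  Rabs (neg h) ^ k <= Rabs h ^ 2.
Proof.
intros Hk Hh.
assert (Hn : Rabs (neg h) <= Rabs h).
{ unfold neg, Rmin; destruct Rle_dec; unfold Rabs; repeat destruct Rcase_abs; lra. }
replace k with (2 + (k - 2))%nat by lia; rewrite pow_add.
rewrite <- (Rmult_1_r (Rabs h ^ 2)).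
apply Rmult_le_compat; try apply pow_le; try apply Rabs_pos.
- apply pow_incr; split; [apply Rabs_pos | exact Hn].
- rewrite <- (pow1 (k - 2)); apply pow_incr; split; [apply Rabs_pos | lra].
Qed.

Lemma neg_pow_is_derive (k : nat) s : (2 <= k)%nat ->
  is_derive (fun y => neg y ^ k) s (INR k * neg s ^ (k - 1)).
Proof.
intros Hk; destruct (Rtotal_order s 0) as [Hs|[Hs|Hs]].
- apply is_derive_ext_loc with (fun y => y ^ k).
  + assert (Hp : 0 < - s) by lra; exists (mkposreal _ Hp); intros y Hy.
    apply ball_R in Hy; change (Rabs (y - s) < - s) in Hy; apply Rabs_def2 in Hy.
    unfold neg; rewrite Rmin_left by lra; reflexivity.
  + apply is_derive_eq with (INR k * 1 * s ^ Init.Nat.pred k).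
    * apply is_derive_pow, (is_derive_id (K := R_AbsRing)).
    * unfold neg; rewrite Rmin_left by lra; replace (k - 1)%nat with (Init.Nat.pred k) by lia; ring.
- subst s; apply is_derive_Reals; intros e He.
  assert (Hd : 0 < Rmin 1 e) by (apply Rmin_pos; lra).
  exists (mkposreal _ Hd); intros h Hh0 Hh; simpl in Hh.
  pose proof (Rmin_l 1 e); pose proof (Rmin_r 1 e).
  unfold neg at 2 3; rewrite Rmin_left, Rplus_0_l by lra.
  rewrite !pow_i by lia; rewrite Rmult_0_r, !Rminus_0_r.
  assert (Hh1 : 0 < Rabs h) by (apply Rabs_pos_lt; auto).
  pose proof (Rabs_neg_pow_le k h Hk ltac:(lra)) as Hpow.
  unfold Rdiv; rewrite Rabs_mult, Rabs_inv, <- RPow_abs.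
  apply (Rmult_lt_reg_r (Rabs h)); [lra|].
  rewrite Rmult_assoc, Rinv_l, Rmult_1_r by lra; simpl in Hpow; nra.
- apply is_derive_ext_loc with (fun _ => 0).
  + exists (mkposreal _ Hs); intros y Hy.
    apply ball_R in Hy; change (Rabs (y - s) < s) in Hy; apply Rabs_def2 in Hy.
    unfold neg; rewrite Rmin_right by lra; rewrite pow_i by lia; reflexivity.
  + apply is_derive_eq with 0; [apply (is_derive_const (K := R_AbsRing) (V := R_NormedModule)) |].
    unfold neg; rewrite Rmin_right by lra; rewrite pow_i by lia; ring.
Qed.

Lemma neg_nonpos s : neg s <= 0.
Proof. apply Rmin_r. Qed.

Lemma neg_mul s : neg s * s = neg s ^ 2.
Proof. unfold neg, Rmin; destruct Rle_dec; simpl; lra. Qed.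

Lemma neg_eq_0 s : neg s = 0 <-> 0 <= s.
Proof. unfold neg, Rmin; destruct Rle_dec; lra. Qed.

Lemma neg_pow_continuity_pt (k : nat) s : (2 <= k)%nat -> continuity_pt (fun y => neg y ^ k) s.
Proof. intros Hk; eapply is_derive_continuity_pt, neg_pow_is_derive, Hk. Qed.

Lemma neg_pow4_comp_is_derive (f : R -> R) x a : is_derive f x a ->
  is_derive (fun y => neg (f y) ^ 4) x (4 * neg (f x) ^ 3 * a).
Proof.
intros Hf; apply (is_derive_Rcomp (fun y => neg y ^ 4) f); auto.
eapply is_derive_eq; [apply neg_pow_is_derive; lia | simpl; ring].
Qed.

Lemma neg_pow3_comp_is_derive (f : R -> R) x a : is_derive f x a ->
  is_derive (fun y => neg (f y) ^ 3) x (3 * neg (f x) ^ 2 * a).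
Proof.
intros Hf; apply (is_derive_Rcomp (fun y => neg y ^ 3) f); auto.
eapply is_derive_eq; [apply neg_pow_is_derive; lia | simpl; ring].
Qed.

Lemma neg_pow4_weighted_source_nonpos s w g K sig2 :
  0 < sig2 -> 6 * g ^ 2 <= K * sig2 ->
  - K * neg s ^ 4 - 12 * neg s ^ 2 * w * (sig2 / 2 * w + g * s) <= 0.
Proof.
intros Hs HK.
assert (Hn4 : (neg s * s) ^ 2 = neg s ^ 4) by (rewrite neg_mul; ring).
assert (H2 : 0 <= neg s ^ 2) by apply pow2_ge_0.
assert (Hsq : 0 <= neg s ^ 2 * (sig2 * w + g * s) ^ 2)
  by (apply Rmult_le_pos; [exact H2 | apply pow2_ge_0]).
assert (Hk : 0 <= (K * sig2 - 6 * g ^ 2) * neg s ^ 4)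
  by (apply Rmult_le_pos; [lra | replace (neg s ^ 4) with ((neg s ^ 2) ^ 2) by ring;
    apply pow2_ge_0]).
apply (Rmult_le_reg_l sig2); [exact Hs|]; rewrite Rmult_0_r; nra.
Qed.

Lemma neg_pow_backward_source_nonneg s w g r sig2 :
  0 <= sig2 -> 0 <= r ->
  0 <= sig2 / 2 * (12 * neg s ^ 2) * w ^ 2 + 4 * neg s ^ 3 * (r * s - g ^ 2).
Proof.
intros Hs Hr; pose proof (neg_nonpos s); pose proof (neg_mul s).
assert (0 <= neg s ^ 2 * w ^ 2) by (apply Rmult_le_pos; apply pow2_ge_0).
assert (0 <= r * (neg s ^ 2) ^ 2) by (apply Rmult_le_pos; [lra | apply pow2_ge_0]).
assert (0 <= - neg s ^ 3 * g ^ 2) by (apply Rmult_le_pos; [simpl; nra | apply pow2_ge_0]).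
replace (4 * neg s ^ 3 * (r * s - g ^ 2))
  with (4 * r * (neg s ^ 2) * (neg s * s) - 4 * neg s ^ 3 * g ^ 2) by ring.
rewrite neg_mul; nra.
Qed.

Definition Psi (s : R) := (s + 1) * ln (s + 1) - s.

Lemma Psi_is_derive s : -1 < s -> is_derive Psi s (ln (s + 1)).
Proof. intros Hs; unfold Psi; auto_derive; [lra | field; lra]. Qed.

Lemma ln_shift_is_derive s : -1 < s -> is_derive (fun y => ln (y + 1)) s (/ (s + 1)).
Proof. intros Hs; auto_derive; [lra | field; lra]. Qed.

Lemma inv_shift_continuity_pt s : -1 < s -> continuity_pt (fun y => / (y + 1)) s.
Proof.
intros Hs; apply (is_derive_continuity_pt _ _ (- / (s + 1) ^ 2)).
auto_derive; [lra | field; lra].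
Qed.

Lemma Psi_nonneg s : 0 <= s -> 0 <= Psi s.
Proof.
intros Hs; unfold Psi.
pose proof (exp_ineq1_le (- ln (s + 1))) as H.
rewrite exp_Ropp, exp_ln in H by lra.
apply (Rmult_le_compat_l (s + 1)) in H; [|lra].
replace ((s + 1) * / (s + 1)) with 1 in H by (field; lra).
nra.
Qed.

Lemma entropy_dissipation_bound sigma w mu g : 0 <= mu ->
  sigma ^ 4 / 4 * (w ^ 2 / (mu + 1))
  <= - sigma ^ 2 * (- (/ (mu + 1) * w) * (sigma ^ 2 / 2 * w + g * mu)) + g ^ 2 * mu.
Proof.
intros Hmu; apply (Rmult_le_reg_r (mu + 1)); [lra|].
replace (sigma ^ 4 / 4 * (w ^ 2 / (mu + 1)) * (mu + 1)) with (sigma ^ 4 / 4 * w ^ 2)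
  by (field; lra).
replace ((- sigma ^ 2 * (- (/ (mu + 1) * w) * (sigma ^ 2 / 2 * w + g * mu)) + g ^ 2 * mu)
         * (mu + 1))
  with (sigma ^ 4 / 4 * w ^ 2 + (sigma ^ 2 / 2 * w + g * mu) ^ 2 + g ^ 2 * mu) by (field; lra).
assert (0 <= g ^ 2 * mu) by (apply Rmult_le_pos; [apply pow2_ge_0 | lra]).
pose proof (pow2_ge_0 (sigma ^ 2 / 2 * w + g * mu)); lra.
Qed.

Lemma duality_quadratic_bound b c A : b + c = 1 -> 0 < c -> 0 <= b ->
  (b + c * A) * (/ 2 * (b + c * A - A)) <= b / (8 * c).
Proof.
intros Hbc Hc Hb; apply (Rmult_le_reg_r (8 * c)); [lra|].
replace (b / (8 * c) * (8 * c)) with b by (field; lra).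
assert (Hid : b - (b + c * A) * (/ 2 * (b + c * A - A)) * (8 * c) = b * (1 - 2 * (b + c * A)) ^ 2)
  by (replace b with (1 - c) by lra; field).
assert (0 <= b * (1 - 2 * (b + c * A)) ^ 2) by (apply Rmult_le_pos; [lra | apply pow2_ge_0]).
lra.
Qed.

Lemma Iop_Icl s l : Iop l s -> Icl l s.
Proof. unfold Iop, Icl; lra. Qed.

Lemma Icl_of_Rmin_Rmax l y : 0 <= l -> Rmin 0 l < y < Rmax 0 l -> Icl l y.
Proof. intros Hl; rewrite Rmin_left, Rmax_right by exact Hl; unfold Icl; lra. Qed.

(* Composing with the projection onto [0,T] x [0,L] turns continuity up to the boundary into
   continuity everywhere, the form required by Coquelicot's integration lemmas. *)
Definition rect_ext (T L : R) (f : R -> R -> R) : R -> R -> R :=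
  fun t x => f (clip 0 T t) (clip 0 L x).

Definition continuous_rect (T L : R) (f : R -> R -> R) : Prop :=
  forall t x, continuity_2d_pt (rect_ext T L f) t x.

Definition unif_cont_rect (T L : R) (f : R -> R -> R) : Prop :=
  forall eps, 0 < eps -> exists d, 0 < d /\ forall t x t' x',
    Icl T t -> Icl L x -> Icl T t' -> Icl L x' ->
    Rabs (t - t') < d -> Rabs (x - x') < d -> Rabs (f t x - f t' x') < eps.

Lemma continuity_2d_pt_section_t f t x :
  continuity_2d_pt f t x -> continuous (fun s => f s x) t.
Proof.
intros H; apply continuity_pt_filterlim; intros e He.
destruct (H (mkposreal e He)) as [d Hd].
exists d; split; [apply cond_pos|]; intros y [_ Hy].
apply Hd; [exact Hy | rewrite Rminus_diag, Rabs_R0; apply cond_pos].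
Qed.

Lemma continuity_2d_pt_section_x f t x :
  continuity_2d_pt f t x -> continuous (fun y => f t y) x.
Proof.
intros H; apply continuity_pt_filterlim; intros e He.
destruct (H (mkposreal e He)) as [d Hd].
exists d; split; [apply cond_pos|]; intros y [_ Hy].
apply Hd; [rewrite Rminus_diag, Rabs_R0; apply cond_pos | exact Hy].
Qed.

Section RectangleContinuity.
Variables T L : R.
Hypotheses (HT : 0 < T) (HL : 0 < L).

Lemma continuous_rect_of_on f :
  continuous_on (Rcl T L) (uncurry2 f) -> continuous_rect T L f.
Proof.
intros Hc t x e.
set (t0 := clip 0 T t); set (x0 := clip 0 L x).
assert (Hr : Rcl T L (t0, x0)) by (split; apply clip_in; lra).
destruct (proj1 (filterlim_locally _ _) (Hc _ Hr) e) as [d Hd].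
exists d; intros u v Hu Hv.
apply ball_R, (Hd (clip 0 T u, clip 0 L v)).
- apply ball_R2; split; simpl; eapply Rle_lt_trans;
    try (apply Rabs_clip_le; lra); assumption.
- split; apply clip_in; lra.
Qed.

Lemma unif_cont_rect_of f : continuous_rect T L f -> unif_cont_rect T L f.
Proof.
intros Hc eps Heps.
destruct (uniform_continuity_2d (rect_ext T L f) 0 T 0 L (fun t x _ _ => Hc t x)
  (mkposreal eps Heps)) as [d Hd].
exists d; split; [apply cond_pos|].
intros t x t' x' Ht Hx Ht' Hx' H1 H2.
specialize (Hd t' x' t x Ht' Hx' Ht Hx H1 H2).
unfold rect_ext in Hd; rewrite !clip_id in Hd; assumption.
Qed.

Lemma interior_radius t x : Iop T t -> Iop L x ->
  exists d : posreal, forall u v, Rabs (u - t) < d -> Rabs (v - x) < d -> Iop T u /\ Iop L v.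
Proof.
unfold Iop; intros Ht Hx.
assert (Hd : 0 < Rmin (Rmin t (T - t)) (Rmin x (L - x))) by (repeat apply Rmin_pos; lra).
exists (mkposreal _ Hd); simpl; intros u v Hu Hv.
apply Rabs_def2 in Hu; apply Rabs_def2 in Hv.
pose proof (Rmin_l (Rmin t (T - t)) (Rmin x (L - x))).
pose proof (Rmin_r (Rmin t (T - t)) (Rmin x (L - x))).
pose proof (Rmin_l t (T - t)); pose proof (Rmin_r t (T - t)).
pose proof (Rmin_l x (L - x)); pose proof (Rmin_r x (L - x)).
lra.
Qed.

Lemma continuity_2d_pt_interior f t x :
  continuous_rect T L f -> Iop T t -> Iop L x -> continuity_2d_pt f t x.
Proof.
intros Hc Ht Hx.
apply continuity_2d_pt_ext_loc with (rect_ext T L f); [|apply Hc].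
destruct (interior_radius t x Ht Hx) as [d Hd].
exists d; intros u v Hu Hv.
destruct (Hd u v Hu Hv) as [Hu' Hv']; unfold Iop in *.
unfold rect_ext; rewrite !clip_id by lra; reflexivity.
Qed.

Lemma continuity_2d_pt_of_on_open f t x :
  continuous_on (Rop T L) (uncurry2 f) -> Iop T t -> Iop L x -> continuity_2d_pt f t x.
Proof.
intros Hc Ht Hx e.
destruct (proj1 (filterlim_locally _ _) (Hc (t, x) (conj Ht Hx)) e) as [d Hd].
destruct (interior_radius t x Ht Hx) as [d' Hd'].
assert (Hm : 0 < Rmin d d') by (apply Rmin_pos; apply cond_pos).
exists (mkposreal _ Hm); simpl; intros u v Hu Hv.
pose proof (Rmin_l d d'); pose proof (Rmin_r d d').
apply ball_R, (Hd (u, v)).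
- apply ball_R2; simpl; lra.
- apply Hd'; simpl; lra.
Qed.

Lemma continuous_rect_plus f g : continuous_rect T L f -> continuous_rect T L g ->
  continuous_rect T L (fun t x => f t x + g t x).
Proof. intros Hf Hg t x; apply continuity_2d_pt_plus; auto. Qed.

Lemma continuous_rect_minus f g : continuous_rect T L f -> continuous_rect T L g ->
  continuous_rect T L (fun t x => f t x - g t x).
Proof. intros Hf Hg t x; apply continuity_2d_pt_minus; auto. Qed.

Lemma continuous_rect_mult f g : continuous_rect T L f -> continuous_rect T L g ->
  continuous_rect T L (fun t x => f t x * g t x).
Proof. intros Hf Hg t x; apply continuity_2d_pt_mult; auto. Qed.

Lemma continuous_rect_opp f : continuous_rect T L f -> continuous_rect T L (fun t x => - f t x).
Proof. intros Hf t x; apply continuity_2d_pt_opp; auto. Qed.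

Lemma continuous_rect_const k : continuous_rect T L (fun _ _ => k).
Proof. intros t x; apply continuity_2d_pt_const. Qed.

Lemma continuous_rect_comp (p : R -> R) f :
  (forall t x, Icl T t -> Icl L x -> continuity_pt p (f t x)) ->
  continuous_rect T L f -> continuous_rect T L (fun t x => p (f t x)).
Proof.
intros Hp Hf t x.
apply (continuity_1d_2d_pt_comp p (rect_ext T L f)); [|apply Hf].
apply Hp; apply clip_in; lra.
Qed.

Lemma continuous_rect_time (h : R -> R) :
  (forall s, continuous (fun s => h (clip 0 T s)) s) -> continuous_rect T L (fun t _ => h t).
Proof.
intros Hh t x e.
destruct (proj1 (filterlim_locally _ _) (Hh t) e) as [d Hd].
exists d; intros u v Hu _; apply ball_R, Hd, Hu.
Qed.

Lemma continuous_rect_pow f n : continuous_rect T L f ->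
  continuous_rect T L (fun t x => f t x ^ n).
Proof.
intros Hf; apply (continuous_rect_comp (fun y => y ^ n)); auto.
intros t x _ _; apply (is_derive_continuity_pt _ _ (INR n * f t x ^ pred n)).
auto_derive; [exact I | ring].
Qed.

Lemma continuous_rect_neg_pow f k : (2 <= k)%nat -> continuous_rect T L f ->
  continuous_rect T L (fun t x => neg (f t x) ^ k).
Proof.
intros Hk Hf; apply (continuous_rect_comp (fun y => neg y ^ k)); auto.
intros; apply neg_pow_continuity_pt, Hk.
Qed.

Lemma continuous_rect_exp_time K : continuous_rect T L (fun t _ => exp (- K * t)).
Proof.
apply continuous_rect_time; intros s.
apply (continuous_clip_pt 0 T (fun y => exp (- K * y))); [lra|]; intros y.
apply (is_derive_continuity_pt _ _ (exp (- K * y) * - K)); auto_derive; [exact I | ring].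
Qed.

End RectangleContinuity.

Section RectangleIntegrals.
Variables T L : R.
Hypotheses (HT : 0 < T) (HL : 0 < L).

Lemma continuous_rect_bounded f :
  continuous_rect T L f -> exists M, forall t x, Icl T t -> Icl L x -> Rabs (f t x) <= M.
Proof.
intros Hc; destruct (unif_cont_rect_of T L f Hc 1 Rlt_0_1) as [d [Hd Hf]].
destruct (INR_unbounded ((T + L) / (d / 2))) as [n Hn].
assert (Hnd : T + L <= INR n * (d / 2)).
{ apply Rgt_lt, (Rmult_lt_compat_r (d / 2)) in Hn; [|lra].
  unfold Rdiv at 1 in Hn; rewrite Rmult_assoc, Rinv_l in Hn; lra. }
exists (Rabs (f 0 0) + 2 * INR n); intros t x Ht Hx; unfold Icl in *.
assert (Hx0 : Rabs (f t x - f t 0) <= INR n).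
{ apply (unif_cont_step_bound (f t) 0 L d); auto; try lra.
  intros s s' Hs Hs' Hss; apply Hf; unfold Icl; auto.
  rewrite Rminus_diag, Rabs_R0; lra. }
assert (Ht0 : Rabs (f t 0 - f 0 0) <= INR n).
{ apply (unif_cont_step_bound (fun s => f s 0) 0 T d); auto; try lra.
  intros s s' Hs Hs' Hss; apply Hf; unfold Icl; auto; try lra.
  rewrite Rminus_diag, Rabs_R0; lra. }
replace (f t x) with ((f t x - f t 0) + (f t 0 - f 0 0) + f 0 0) by ring.
eapply Rle_trans; [apply Rabs_triang|].
eapply Rle_trans; [apply Rplus_le_compat_r, Rabs_triang | lra].
Qed.

Lemma unif_cont_on_section f t :
  continuous_rect T L f -> Icl T t -> unif_cont_on 0 L (f t).
Proof.
intros Hc Ht e He; destruct (unif_cont_rect_of T L f Hc e He) as [d [Hd Hf]].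
exists d; split; auto; intros s s' Hs Hs' Hss; apply Hf; auto.
rewrite Rminus_diag, Rabs_R0; auto.
Qed.

Lemma ex_RInt_rect f t a b :
  continuous_rect T L f -> Icl T t -> Icl L a -> Icl L b -> ex_RInt (f t) a b.
Proof.
intros; apply (ex_RInt_unif_cont_on 0 L); auto; try lra.
apply unif_cont_on_section; auto.
Qed.

Lemma unif_cont_on_RInt_param f a b :
  continuous_rect T L f -> 0 <= a <= b -> b <= L -> unif_cont_on 0 T (fun t => RInt (f t) a b).
Proof.
intros Hc Hab HbL e He.
set (e' := e / (2 * (L + 1))).
assert (He' : 0 < e') by (apply Rdiv_lt_0_compat; lra).
destruct (unif_cont_rect_of T L f Hc e' He') as [d [Hd Hf]].
exists d; split; auto; intros s s' Hs Hs' Hss.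
assert (I1 : ex_RInt (f s) a b) by (apply ex_RInt_rect; unfold Icl; auto; lra).
assert (I2 : ex_RInt (f s') a b) by (apply ex_RInt_rect; unfold Icl; auto; lra).
rewrite <- (RInt_minus (V := R_CompleteNormedModule)) by assumption.
eapply Rle_lt_trans.
- apply abs_RInt_le_const with (M := e'); [lra | apply (ex_RInt_minus (V := R_NormedModule)); auto|].
  intros x Hx; left; apply Hf; unfold Icl; auto; try lra.
  rewrite Rminus_diag, Rabs_R0; auto.
- assert (Hlt : (b - a) * / (2 * (L + 1)) < 1).
  { apply (Rmult_lt_reg_r (2 * (L + 1))); [lra|].
    rewrite Rmult_assoc, Rinv_l by lra; lra. }
  unfold e', Rdiv; nra.
Qed.

Lemma RInt_rect_tails_le f M s a : continuous_rect T L f ->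
  (forall t x, Icl T t -> Icl L x -> Rabs (f t x) <= M) -> Icl T s -> 0 <= a -> 2 * a <= L ->
  Rabs (RInt (f s) 0 L - RInt (f s) a (L - a)) <= 2 * a * M.
Proof.
intros Hf HM Hs Ha HaL; apply RInt_tails_le; auto; apply unif_cont_on_section; auto.
Qed.

Lemma ex_RInt_iter f t1 t2 : continuous_rect T L f -> Icl T t1 -> Icl T t2 ->
  ex_RInt (fun t => RInt (f t) 0 L) t1 t2.
Proof.
intros Hf H1 H2; apply (ex_RInt_unif_cont_on 0 T); auto; try lra.
apply unif_cont_on_RInt_param; auto; lra.
Qed.

Lemma RInt_rect_le f g t : continuous_rect T L f -> continuous_rect T L g -> Icl T t ->
  (forall x, Icl L x -> f t x <= g t x) -> RInt (f t) 0 L <= RInt (g t) 0 L.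
Proof.
intros Hf Hg Ht Hfg; apply RInt_le; try lra; try (apply ex_RInt_rect; unfold Icl; auto; lra).
intros; apply Hfg; unfold Icl; lra.
Qed.

Lemma RInt_iter_le f g t1 t2 : continuous_rect T L f -> continuous_rect T L g ->
  (forall t x, Icl T t -> Icl L x -> f t x <= g t x) -> 0 <= t1 -> t1 <= t2 -> t2 <= T ->
  RInt (fun t => RInt (f t) 0 L) t1 t2 <= RInt (fun t => RInt (g t) 0 L) t1 t2.
Proof.
intros Hf Hg Hfg H1 H12 H2.
apply RInt_le; auto; try (apply ex_RInt_iter; unfold Icl; auto; lra).
intros t Ht; apply RInt_rect_le; auto; unfold Icl; try lra.
intros; apply Hfg; unfold Icl; auto; lra.
Qed.

Lemma RInt_rect_plus f g t : continuous_rect T L f -> continuous_rect T L g -> Icl T t ->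
  RInt (fun x => f t x + g t x) 0 L = RInt (f t) 0 L + RInt (g t) 0 L.
Proof.
intros Hf Hg Ht; apply (RInt_plus (V := R_CompleteNormedModule));
  apply ex_RInt_rect; unfold Icl; auto; lra.
Qed.

Lemma RInt_rect_scal k f t : continuous_rect T L f -> Icl T t ->
  RInt (fun x => k * f t x) 0 L = k * RInt (f t) 0 L.
Proof.
intros Hf Ht; apply (RInt_scal (V := R_CompleteNormedModule));
  apply ex_RInt_rect; unfold Icl; auto; lra.
Qed.

Lemma RInt_iter_plus f g t1 t2 : continuous_rect T L f -> continuous_rect T L g ->
  Icl T t1 -> Icl T t2 ->
  RInt (fun t => RInt (fun x => f t x + g t x) 0 L) t1 t2 =
  RInt (fun t => RInt (f t) 0 L) t1 t2 + RInt (fun t => RInt (g t) 0 L) t1 t2.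
Proof.
intros Hf Hg H1 H2.
rewrite (RInt_ext _ (fun t => RInt (f t) 0 L + RInt (g t) 0 L)).
- apply (RInt_plus (V := R_CompleteNormedModule)); apply ex_RInt_iter; auto.
- intros t Ht; apply RInt_rect_plus; auto; unfold Icl in *.
  unfold Rmin, Rmax in Ht; destruct Rle_dec in Ht; lra.
Qed.

Lemma RInt_iter_scal k f t1 t2 : continuous_rect T L f -> Icl T t1 -> Icl T t2 ->
  RInt (fun t => RInt (fun x => k * f t x) 0 L) t1 t2 = k * RInt (fun t => RInt (f t) 0 L) t1 t2.
Proof.
intros Hf H1 H2.
rewrite (RInt_ext _ (fun t => k * RInt (f t) 0 L)).
- apply (RInt_scal (V := R_CompleteNormedModule)); apply ex_RInt_iter; auto.
- intros t Ht; apply RInt_rect_scal; auto; unfold Icl in *.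
  unfold Rmin, Rmax in Ht; destruct Rle_dec in Ht; lra.
Qed.

Lemma nonneg_of_RInt_neg_pow4 f t : continuous_rect T L f -> Icl T t ->
  RInt (fun x => neg (f t x) ^ 4) 0 L <= 0 -> forall x, Icl L x -> 0 <= f t x.
Proof.
intros Hf Ht Hint x Hx.
assert (Hx0 : neg (f t x) ^ 4 = 0).
{ apply (RInt_nonneg_eq_0 L (fun y => neg (f t y) ^ 4)); auto.
  - apply (unif_cont_on_section (fun t y => neg (f t y) ^ 4)); auto.
    apply continuous_rect_neg_pow; auto.
  - intros y _; replace (neg (f t y) ^ 4) with ((neg (f t y) ^ 2) ^ 2) by ring; apply pow2_ge_0. }
apply neg_eq_0; destruct (Req_dec (neg (f t x)) 0) as [|Hn]; auto.
contradict Hx0; apply pow_nonzero, Hn.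
Qed.

End RectangleIntegrals.

Ltac rect_continuity :=
  repeat first
    [ assumption
    | apply continuous_rect_neg_pow; [assumption | assumption | lia |]
    | apply continuous_rect_pow; [assumption | assumption |]
    | apply continuous_rect_exp_time; assumption
    | apply continuous_rect_minus
    | apply continuous_rect_plus
    | apply continuous_rect_mult
    | apply continuous_rect_opp
    | apply continuous_rect_const ].

Ltac interior_continuity T L :=
  repeat first
    [ solve [apply (continuity_2d_pt_interior T L); [rect_continuity | assumption | assumption]]
    | solve [apply (continuity_2d_pt_of_on_open T L); assumption]
    | apply continuity_2d_pt_minus
    | apply continuity_2d_pt_plus
    | apply continuity_2d_pt_mult ].

Section ConservationLaw.
Variables (T L : R) (E Et F Sg : R -> R -> R).
Hypotheses (HT : 0 < T) (HL : 0 < L).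
Hypotheses (HE : continuous_rect T L E) (HF : continuous_rect T L F)
  (HS : continuous_rect T L Sg).
Hypothesis HEt : forall t x, Iop T t -> Iop L x -> continuity_2d_pt Et t x.
Hypothesis HdE : forall t x, Iop T t -> Iop L x -> is_derive (fun s => E s x) t (Et t x).
Hypothesis HdF :
  forall t x, Iop T t -> Iop L x -> is_derive (fun y => F t y) x (Et t x - Sg t x).
Hypothesis HF0 : forall t, Icl T t -> F t 0 = 0 /\ F t L = 0.

Lemma RInt_interior_is_derive a b t : 0 < a -> a <= b -> b < L -> Iop T t ->
  is_derive (fun s => RInt (E s) a b) t (RInt (Et t) a b).
Proof.
intros Ha Hab Hb Ht.
assert (Hx : forall x, Rmin a b <= x <= Rmax a b -> Iop L x).
{ intros x; unfold Rmin, Rmax, Iop; destruct Rle_dec; lra. }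
destruct (interior_radius T L t a Ht (Hx a ltac:(unfold Rmin, Rmax; destruct Rle_dec; lra)))
  as [d Hd].
assert (Hnear : forall y, ball t d y -> Iop T y).
{ intros y Hy; apply ball_R in Hy; apply (Hd y a Hy); rewrite Rminus_diag, Rabs_R0; apply cond_pos. }
rewrite (RInt_ext (Et t) (fun x => Derive (fun u => E u x) t)).
2:{ intros x Hx'; symmetry; apply is_derive_unique, HdE; auto; apply Hx; lra. }
apply (is_derive_RInt_param E a b t).
- exists d; intros y Hy x Hx'; eexists; apply HdE; auto.
- intros x Hx'; apply continuity_2d_pt_ext_loc with Et; [| apply HEt; auto].
  destruct (interior_radius T L t x Ht (Hx x Hx')) as [d' Hd'].
  exists d'; intros u v Hu Hv; destruct (Hd' u v Hu Hv).
  symmetry; apply is_derive_unique, HdE; auto.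
- exists d; intros y Hy; specialize (Hnear y Hy).
  apply (ex_RInt_rect T L); auto; unfold Icl, Iop in *; lra.
Qed.

Lemma RInt_interior_flux a b t : 0 < a -> a <= b -> b < L -> Iop T t ->
  RInt (Et t) a b = F t b - F t a + RInt (Sg t) a b.
Proof.
intros Ha Hab Hb Ht.
assert (Hx : forall x, Rmin a b <= x <= Rmax a b -> Iop L x).
{ intros x; unfold Rmin, Rmax, Iop; destruct Rle_dec; lra. }
assert (I1 : is_RInt (fun x => Et t x - Sg t x) a b (F t b - F t a)).
{ apply (is_RInt_derive (V := R_CompleteNormedModule) (fun y => F t y)).
  - intros x Hx'; apply HdF; auto.
  - intros x Hx'; apply (continuity_2d_pt_section_x (fun u v => Et u v - Sg u v)).
    apply continuity_2d_pt_minus; [apply HEt; auto|].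
    apply (continuity_2d_pt_interior T L); auto. }
assert (I2 : ex_RInt (Sg t) a b) by (apply (ex_RInt_rect T L); unfold Icl, Iop in *; auto; lra).
rewrite (RInt_ext (Et t) (fun x => (Et t x - Sg t x) + Sg t x)) by (intros; simpl; ring).
rewrite (RInt_plus (V := R_CompleteNormedModule) (fun x => Et t x - Sg t x) (Sg t));
  [| eexists; exact I1 | exact I2].
rewrite (is_RInt_unique _ _ _ _ I1); reflexivity.
Qed.

Lemma interior_flux_continuous a b t : 0 < a -> a <= b -> b < L -> Iop T t ->
  continuous (fun s => F s b - F s a + RInt (Sg s) a b) t.
Proof.
intros Ha Hab Hb Ht.
apply (continuous_plus (fun s => F s b - F s a) (fun s => RInt (Sg s) a b)).
- apply (continuous_minus (fun s => F s b) (fun s => F s a));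
    apply (continuity_2d_pt_section_t F), (continuity_2d_pt_interior T L); auto;
    unfold Iop; lra.
- apply (continuous_unif_cont_on_interior 0 T); [|exact Ht].
  apply (unif_cont_on_RInt_param T L); auto; lra.
Qed.

Lemma interior_balance a b s1 s2 : 0 < a -> a <= b -> b < L -> Iop T s1 -> Iop T s2 ->
  RInt (E s2) a b - RInt (E s1) a b = RInt (fun t => F t b - F t a + RInt (Sg t) a b) s1 s2.
Proof.
intros Ha Hab Hb H1 H2.
assert (Hs : forall t, Rmin s1 s2 <= t <= Rmax s1 s2 -> Iop T t).
{ unfold Iop in *; intros t; unfold Rmin, Rmax; destruct Rle_dec; lra. }
symmetry; apply is_RInt_unique.
apply (is_RInt_derive (V := R_CompleteNormedModule) (fun s => RInt (E s) a b)).
- intros t Ht; rewrite <- RInt_interior_flux by auto.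
  apply RInt_interior_is_derive; auto.
- intros t Ht; apply interior_flux_continuous; auto.
Qed.

Lemma flux_small_near_boundary eps : 0 < eps -> exists d, 0 < d /\
  forall t a, Icl T t -> 0 <= a < d -> a <= L -> Rabs (F t a) < eps /\ Rabs (F t (L - a)) < eps.
Proof.
intros Heps; destruct (unif_cont_rect_of T L F HF eps Heps) as [d [Hd HFu]].
exists d; split; auto; intros t a Ht Ha HaL.
destruct (HF0 t Ht) as [F0 FL].
split.
- replace (F t a) with (F t a - F t 0) by (rewrite F0; ring).
  apply HFu; unfold Icl in *; try lra; rewrite ?Rminus_diag, ?Rabs_R0, ?Rabs_pos_eq; lra.
- replace (F t (L - a)) with (F t (L - a) - F t L) by (rewrite FL; ring).
  apply HFu; unfold Icl in *; try lra; rewrite ?Rminus_diag, ?Rabs_R0, ?Rabs_left1; lra.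
Qed.

(* Et is only known to be continuous inside the rectangle, so the balance is first taken on
   [a, L - a] and the boundary strips are estimated as a -> 0. *)
Lemma open_balance s1 s2 : Iop T s1 -> Iop T s2 ->
  RInt (E s2) 0 L - RInt (E s1) 0 L = RInt (fun t => RInt (Sg t) 0 L) s1 s2.
Proof.
intros H1 H2.
destruct (continuous_rect_bounded T L HT HL E HE) as [ME HME].
destruct (continuous_rect_bounded T L HT HL Sg HS) as [MS HMS].
assert (ME0 : 0 <= ME) by (eapply Rle_trans; [apply Rabs_pos | apply (HME 0 0)]; unfold Icl; lra).
assert (MS0 : 0 <= MS) by (eapply Rle_trans; [apply Rabs_pos | apply (HMS 0 0)]; unfold Icl; lra).
set (H := fun t => RInt (Sg t) 0 L).
apply Rminus_diag_uniq, (eq_0_of_Rabs_le_eps _ (4 * ME + T * (2 + 2 * MS))); [nra|].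
intros eps Heps; destruct (flux_small_near_boundary eps Heps) as [dF [HdF0 HFa]].
assert (Ha0 : 0 < Rmin (L / 2) (Rmin (dF / 2) eps)) by (repeat apply Rmin_pos; lra).
pose proof (Rmin_l (L / 2) (Rmin (dF / 2) eps)); pose proof (Rmin_r (L / 2) (Rmin (dF / 2) eps)).
pose proof (Rmin_l (dF / 2) eps); pose proof (Rmin_r (dF / 2) eps).
set (a := Rmin (L / 2) (Rmin (dF / 2) eps)) in *.
set (h := fun t => F t (L - a) - F t a + RInt (Sg t) a (L - a)).
pose proof (interior_balance a (L - a) s1 s2 Ha0 ltac:(lra) ltac:(lra) H1 H2) as Id; fold h in Id.
assert (Hst : forall t, Rmin s1 s2 <= t <= Rmax s1 s2 -> Iop T t).
{ unfold Iop in *; intros t; unfold Rmin, Rmax; destruct Rle_dec; lra. }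
assert (Hh : forall t, Rmin s1 s2 <= t <= Rmax s1 s2 -> Rabs (h t - H t) <= 2 * eps + 2 * a * MS).
{ intros t Ht; apply Hst, Iop_Icl in Ht.
  destruct (HFa t a Ht ltac:(lra) ltac:(lra)) as [Fa Fb].
  pose proof (Rabs_le_bounds _ _ (RInt_rect_tails_le T L Sg MS t a HS HMS Ht ltac:(lra) ltac:(lra))).
  apply Rabs_def2 in Fa; apply Rabs_def2 in Fb; apply Rabs_le; unfold h, H; lra. }
assert (Ih : ex_RInt h s1 s2).
{ apply (ex_RInt_continuous (V := R_CompleteNormedModule)); intros t Ht.
  apply interior_flux_continuous; auto; lra. }
assert (IH : ex_RInt H s1 s2).
{ apply (ex_RInt_unif_cont_on 0 T); unfold Iop in *; try lra.
  apply (unif_cont_on_RInt_param T L); auto; lra. }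
assert (Hdiff : Rabs (RInt h s1 s2 - RInt H s1 s2) <= T * (2 * eps + 2 * eps * MS)).
{ rewrite <- (RInt_minus (V := R_CompleteNormedModule)) by assumption.
  eapply Rle_trans; [apply Rabs_RInt_le_const with (M := 2 * eps + 2 * a * MS); auto|].
  - apply (ex_RInt_minus (V := R_NormedModule)); assumption.
  - apply Rmult_le_compat; [apply Rabs_pos | nra | apply Rabs_le; unfold Iop in *; lra | nra]. }
pose proof (Rabs_le_bounds _ _ (RInt_rect_tails_le T L E ME s1 a HE HME (Iop_Icl _ _ H1)
  ltac:(lra) ltac:(lra))).
pose proof (Rabs_le_bounds _ _ (RInt_rect_tails_le T L E ME s2 a HE HME (Iop_Icl _ _ H2)
  ltac:(lra) ltac:(lra))).
apply Rabs_le_bounds in Hdiff.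
assert (a * ME <= eps * ME) by (apply Rmult_le_compat_r; lra).
apply Rabs_le; nra.
Qed.

Lemma balance t1 t2 : Icl T t1 -> Icl T t2 ->
  RInt (E t2) 0 L - RInt (E t1) 0 L = RInt (fun t => RInt (Sg t) 0 L) t1 t2.
Proof.
intros H1 H2.
set (H := fun t => RInt (Sg t) 0 L).
destruct (continuous_rect_bounded T L HT HL Sg HS) as [MS HMS].
assert (UH : unif_cont_on 0 T H) by (apply (unif_cont_on_RInt_param T L); auto; lra).
assert (IH : forall c d, 0 <= c <= T -> 0 <= d <= T -> ex_RInt H c d)
  by (intros; apply (ex_RInt_unif_cont_on 0 T); auto; lra).
assert (Chasles : forall c d, 0 <= c <= T -> 0 <= d <= T -> RInt H 0 d - RInt H 0 c = RInt H c d).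
{ intros c d Hc Hd.
  pose proof (RInt_Chasles (V := R_CompleteNormedModule) H 0 c d) as C.
  unfold plus in C; simpl in C; rewrite <- C by (apply IH; lra).
  apply Rplus_minus_l. }
set (psi := fun t => RInt (E t) 0 L - RInt H 0 t).
assert (Hpsi : forall s s', 0 <= s <= T -> 0 <= s' <= T -> psi s = psi s').
{ apply unif_cont_on_const; auto.
  - apply unif_cont_on_minus.
    + apply (unif_cont_on_RInt_param T L); auto; lra.
    + apply unif_cont_on_RInt_upper with (M := L * MS); [intros; apply IH; lra|].
      intros s Hs; replace (L * MS) with ((L - 0) * MS) by ring.
      apply abs_RInt_le_const; [lra | apply (ex_RInt_rect T L); unfold Icl; auto; lra|].
      intros x Hx; apply HMS; unfold Icl; lra.
  - intros s s' Hs Hs'; unfold psi.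
    pose proof (open_balance s' s Hs' Hs) as B; fold H in B.
    pose proof (Chasles s' s); unfold Iop in *; lra. }
pose proof (Hpsi t1 t2 H1 H2); pose proof (Chasles t1 t2 H1 H2).
unfold psi in *; lra.
Qed.

End ConservationLaw.

Section Solution.
Variables (L T r sigma b c : R) (uT m0 : R -> R) (u ut ux uxx m mt mx mxx : R -> R -> R).
Hypotheses (HL : 0 < L) (HT : 0 < T) (Hr : 0 < r) (Hsig : 0 < sigma).
Hypotheses (Hbc : b + c = 1) (Hb : 0 < b) (Hc : 0 < c).
Hypotheses (Hm0 : forall x, Icl L x -> 0 <= m0 x) (Hm0_mass : RInt m0 0 L = 1)
  (HuT : forall x, Icl L x -> 0 <= uT x).
Hypotheses (Cu : continuous_on (Rcl T L) (uncurry2 u)) (Cm : continuous_on (Rcl T L) (uncurry2 m))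
  (Cux : continuous_on (Rcl T L) (uncurry2 ux)) (Cmx : continuous_on (Rcl T L) (uncurry2 mx))
  (Cut : continuous_on (Rop T L) (uncurry2 ut)) (Cmt : continuous_on (Rop T L) (uncurry2 mt)).
Hypothesis Dx : forall t x, Icl T t -> Iop L x ->
  is_derive (fun y => u t y) x (ux t x) /\ is_derive (fun y => m t y) x (mx t x).
Hypothesis Dt : forall t x, Iop T t -> Iop L x ->
  is_derive (fun s => u s x) t (ut t x) /\ is_derive (fun s => m s x) t (mt t x) /\
  is_derive (fun y => ux t y) x (uxx t x) /\ is_derive (fun y => mx t y) x (mxx t x).
Hypothesis EqU : forall t x, Iop T t -> Iop L x ->
  ut t x + sigma ^ 2 / 2 * uxx t x - r * u t x + (Gfun b c L ux m t x) ^ 2 = 0.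
Hypothesis EqM : forall t x, Iop T t -> Iop L x ->
  is_derive (fun y => Gfun b c L ux m t y * m t y) x (mt t x - sigma ^ 2 / 2 * mxx t x).
Hypothesis Init : forall x, Icl L x -> m 0 x = m0 x /\ u T x = uT x.
Hypothesis Neu : forall t, Icl T t -> ux t 0 = 0 /\ ux t L = 0.
Hypothesis NoF : forall t x, Icl T t -> (x = 0 \/ x = L) ->
  sigma ^ 2 / 2 * mx t x + Gfun b c L ux m t x * m t x = 0.

Local Notation G := (Gfun b c L ux m).

Definition flux t x := sigma ^ 2 / 2 * mx t x + G t x * m t x.

Lemma u_cont : continuous_rect T L u. Proof. apply continuous_rect_of_on; auto. Qed.
Lemma m_cont : continuous_rect T L m. Proof. apply continuous_rect_of_on; auto. Qed.
Lemma ux_cont : continuous_rect T L ux. Proof. apply continuous_rect_of_on; auto. Qed.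
Lemma mx_cont : continuous_rect T L mx. Proof. apply continuous_rect_of_on; auto. Qed.

Lemma G_cont : continuous_rect T L G.
Proof.
pose proof u_cont; pose proof m_cont; pose proof ux_cont.
unfold Gfun; rect_continuity.
set (A := fun t => RInt (fun y => ux t y * m t y) 0 L).
apply (continuous_rect_time T L A); intros s.
apply (continuous_clip_unif_cont 0 T A); [lra|].
apply (unif_cont_on_RInt_param T L); auto; try lra; rect_continuity.
Qed.

Lemma flux_cont : continuous_rect T L flux.
Proof. pose proof m_cont; pose proof mx_cont; pose proof G_cont; unfold flux; rect_continuity. Qed.

Lemma flux_is_derive t x : Iop T t -> Iop L x -> is_derive (fun y => flux t y) x (mt t x).
Proof.
intros Ht Hx; unfold flux.
apply is_derive_eq with (sigma ^ 2 / 2 * mxx t x + (mt t x - sigma ^ 2 / 2 * mxx t x)); [|ring].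
apply (is_derive_plus (fun y => sigma ^ 2 / 2 * mx t y) (fun y => G t y * m t y)).
- apply is_derive_scal, (Dt t x Ht Hx).
- apply EqM; auto.
Qed.

Lemma flux_boundary t : Icl T t -> flux t 0 = 0 /\ flux t L = 0.
Proof. intros Ht; unfold flux; split; apply NoF; auto. Qed.

Lemma mass_conservation t : Icl T t -> RInt (m t) 0 L = 1.
Proof.
intros Ht.
assert (Hm : RInt (m t) 0 L - RInt (m 0) 0 L = RInt (fun t => RInt (fun _ => 0) 0 L) 0 t).
{ pose proof m_cont; pose proof flux_cont.
  apply (balance T L m mt flux (fun _ _ => 0)); auto; unfold Icl in *; try lra; try rect_continuity.
  - intros; apply (continuity_2d_pt_of_on_open T L); auto.
  - intros s x Hs Hx; apply (Dt s x Hs Hx).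
  - intros s x Hs Hx; rewrite Rminus_0_r; apply flux_is_derive; auto.
  - apply flux_boundary. }
rewrite (RInt_ext (m 0) m0), Hm0_mass in Hm.
2:{ intros x Hx; apply Init, Icl_of_Rmin_Rmax; auto; lra. }
rewrite RInt_iter_zero in Hm; lra.
Qed.

Lemma weighted_neg_m_balance K t : Icl T t ->
  RInt (fun x => exp (- K * t) * neg (m t x) ^ 4) 0 L
  - RInt (fun x => exp (- K * 0) * neg (m 0 x) ^ 4) 0 L
  = RInt (fun s => RInt (fun x => exp (- K * s) *
      (- K * neg (m s x) ^ 4 - 12 * neg (m s x) ^ 2 * mx s x * flux s x)) 0 L) 0 t.
Proof.
intros Ht; pose proof m_cont; pose proof mx_cont; pose proof flux_cont.
apply (balance T L (fun t x => exp (- K * t) * neg (m t x) ^ 4)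
  (fun t x => exp (- K * t) * - K * neg (m t x) ^ 4
    + exp (- K * t) * (4 * neg (m t x) ^ 3 * mt t x))
  (fun t x => exp (- K * t) * (4 * neg (m t x) ^ 3 * flux t x))); auto;
  unfold Icl in *; try lra; try rect_continuity.
- intros; interior_continuity T L.
- intros s x Hs Hx; apply (is_derive_Rmult (fun s => exp (- K * s)) (fun s => neg (m s x) ^ 4)).
  + auto_derive; [exact I | ring].
  + apply (neg_pow4_comp_is_derive (fun s => m s x)), (Dt s x Hs Hx).
- intros s x Hs Hx.
  apply is_derive_eq with (exp (- K * s) *
    (4 * (3 * neg (m s x) ^ 2 * mx s x) * flux s x + 4 * neg (m s x) ^ 3 * mt s x)); [|ring].
  apply is_derive_scal, (is_derive_Rmult (fun y => 4 * neg (m s y) ^ 3) (fun y => flux s y));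
    [|apply flux_is_derive; auto].
  apply is_derive_scal, (neg_pow3_comp_is_derive (fun y => m s y)), (Dx s x); auto.
  apply Iop_Icl, Hs.
- intros s Hs; destruct (flux_boundary s Hs) as [-> ->]; split; ring.
Qed.

(* K = 6 MG^2 / sigma^2, with MG a bound on G, makes the weighted source nonpositive. *)
Lemma m_nonneg t x : Icl T t -> Icl L x -> 0 <= m t x.
Proof.
intros Ht Hx; pose proof m_cont; pose proof mx_cont; pose proof flux_cont.
destruct (continuous_rect_bounded T L HT HL G G_cont) as [MG HMG].
set (K := 6 * MG ^ 2 / sigma ^ 2).
set (E := fun t x => exp (- K * t) * neg (m t x) ^ 4).
assert (HE : continuous_rect T L E) by (unfold E; rect_continuity).
assert (Hsrc : RInt (fun s => RInt (fun y => exp (- K * s) *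
    (- K * neg (m s y) ^ 4 - 12 * neg (m s y) ^ 2 * mx s y * flux s y)) 0 L) 0 t <= 0).
{ apply Rle_trans with (RInt (fun _ => RInt (fun _ => 0) 0 L) 0 t); [|rewrite RInt_iter_zero; lra].
  apply (RInt_iter_le T L); unfold Icl in *; auto; try lra; try rect_continuity.
  intros s y Hs Hy; rewrite <- (Rmult_0_r (exp (- K * s))).
  apply Rmult_le_compat_l; [left; apply exp_pos|].
  apply neg_pow4_weighted_source_nonpos; [apply pow_lt; lra|].
  replace (K * sigma ^ 2) with (6 * MG ^ 2) by (unfold K; field; lra).
  apply Rmult_le_compat_l; [lra | apply pow_maj_Rabs, HMG; auto]. }
assert (HE0 : RInt (E 0) 0 L = 0).
{ rewrite (RInt_ext (E 0) (fun _ => 0)), RInt_const_R; [apply Rmult_0_r|].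
  intros y Hy; apply Icl_of_Rmin_Rmax in Hy; [|lra].
  unfold E; rewrite (proj1 (Init y Hy)), (proj2 (neg_eq_0 _)), pow_i, Rmult_0_r; auto; lia. }
pose proof (weighted_neg_m_balance K t Ht) as B; fold (E t) (E 0) in B.
apply (nonneg_of_RInt_neg_pow4 T L) with (f := m); auto.
apply (Rmult_le_reg_l (exp (- K * t))); [apply exp_pos|].
assert (Hscal : RInt (E t) 0 L = exp (- K * t) * RInt (fun x => neg (m t x) ^ 4) 0 L)
  by (apply (RInt_rect_scal T L) with (f := fun t x => neg (m t x) ^ 4); auto; rect_continuity).
lra.
Qed.

Lemma neg_u_balance t : Icl T t ->
  RInt (fun x => neg (u T x) ^ 4) 0 L - RInt (fun x => neg (u t x) ^ 4) 0 L
  = RInt (fun s => RInt (fun x => sigma ^ 2 / 2 * (12 * neg (u s x) ^ 2) * ux s x ^ 2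
      + 4 * neg (u s x) ^ 3 * (r * u s x - G s x ^ 2)) 0 L) t T.
Proof.
intros Ht; pose proof u_cont; pose proof ux_cont; pose proof G_cont.
apply (balance T L (fun t x => neg (u t x) ^ 4) (fun t x => 4 * neg (u t x) ^ 3 * ut t x)
  (fun t x => - (sigma ^ 2 / 2) * (4 * neg (u t x) ^ 3 * ux t x))); auto;
  unfold Icl in *; try lra; try rect_continuity.
- intros; interior_continuity T L.
- intros s x Hs Hx; apply (neg_pow4_comp_is_derive (fun s => u s x)), (Dt s x Hs Hx).
- intros s x Hs Hx.
  apply is_derive_eq with (- (sigma ^ 2 / 2) *
    (4 * (3 * neg (u s x) ^ 2 * ux s x) * ux s x + 4 * neg (u s x) ^ 3 * uxx s x)).
  + apply is_derive_scal, (is_derive_Rmult (fun y => 4 * neg (u s y) ^ 3) (fun y => ux s y));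
      [|apply (Dt s x Hs Hx)].
    apply is_derive_scal, (neg_pow3_comp_is_derive (fun y => u s y)), (Dx s x); auto.
    apply Iop_Icl, Hs.
  + pose proof (EqU s x Hs Hx).
    replace (ut s x) with (- (sigma ^ 2 / 2 * uxx s x) + r * u s x - G s x ^ 2) by lra; ring.
- intros s Hs; destruct (Neu s Hs) as [-> ->]; split; ring.
Qed.

Lemma u_nonneg t x : Icl T t -> Icl L x -> 0 <= u t x.
Proof.
intros Ht Hx; pose proof u_cont; pose proof ux_cont; pose proof G_cont.
apply (nonneg_of_RInt_neg_pow4 T L) with (f := u); auto.
pose proof (neg_u_balance t Ht) as B.
rewrite (RInt_ext (fun x => neg (u T x) ^ 4) (fun _ => 0)), RInt_const_R, Rmult_0_r in B.
- assert (0 <= RInt (fun s => RInt (fun x => sigma ^ 2 / 2 * (12 * neg (u s x) ^ 2) * ux s x ^ 2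
      + 4 * neg (u s x) ^ 3 * (r * u s x - G s x ^ 2)) 0 L) t T); [|lra].
  apply Rle_trans with (RInt (fun _ => RInt (fun _ => 0) 0 L) t T); [rewrite RInt_iter_zero; lra|].
  apply (RInt_iter_le T L); unfold Icl in *; auto; try lra; try rect_continuity.
  intros; apply neg_pow_backward_source_nonneg; [apply pow_le | ]; lra.
- intros y Hy; apply Icl_of_Rmin_Rmax in Hy; [|lra].
  rewrite (proj2 (Init y Hy)), (proj2 (neg_eq_0 _)), pow_i; auto; lia.
Qed.

Definition um_source t x := r * (u t x * m t x) - G t x ^ 2 * m t x - ux t x * (G t x * m t x).

Lemma um_source_cont : continuous_rect T L um_source.
Proof.
pose proof u_cont; pose proof m_cont; pose proof ux_cont; pose proof G_cont.
unfold um_source; rect_continuity.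
Qed.

Lemma um_balance :
  RInt (fun x => u T x * m T x) 0 L - RInt (fun x => u 0 x * m 0 x) 0 L
  = RInt (fun t => RInt (um_source t) 0 L) 0 T.
Proof.
pose proof u_cont; pose proof m_cont; pose proof ux_cont; pose proof G_cont; pose proof flux_cont.
pose proof um_source_cont.
apply (balance T L (fun t x => u t x * m t x) (fun t x => ut t x * m t x + u t x * mt t x)
  (fun t x => u t x * flux t x - sigma ^ 2 / 2 * (ux t x * m t x))); auto;
  unfold Icl; try lra; try rect_continuity.
- intros; interior_continuity T L.
- intros s x Hs Hx; apply (is_derive_Rmult (fun s => u s x) (fun s => m s x)); apply (Dt s x Hs Hx).
- intros s x Hs Hx; destruct (Dx s x (Iop_Icl _ _ Hs) Hx) as [Du Dm].
  apply is_derive_eq with ((ux s x * flux s x + u s x * mt s x)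
    - sigma ^ 2 / 2 * (uxx s x * m s x + ux s x * mx s x)).
  + apply (is_derive_minus (fun y => u s y * flux s y) (fun y => sigma ^ 2 / 2 * (ux s y * m s y))).
    * apply (is_derive_Rmult (fun y => u s y) (fun y => flux s y));
        [exact Du | apply flux_is_derive; auto].
    * apply is_derive_scal, (is_derive_Rmult (fun y => ux s y) (fun y => m s y));
        [apply (Dt s x Hs Hx) | exact Dm].
  + pose proof (EqU s x Hs Hx).
    replace (ut s x) with (- (sigma ^ 2 / 2 * uxx s x) + r * u s x - G s x ^ 2) by lra.
    unfold flux, um_source; ring.
- intros s Hs; destruct (Neu s Hs) as [-> ->]; destruct (flux_boundary s Hs) as [-> ->]; split; ring.
Qed.

Lemma G_m_integral t : Icl T t ->
  (RInt (fun x => G t x * m t x) 0 L : R)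
  = / 2 * (b + c * RInt (fun y => ux t y * m t y) 0 L - RInt (fun y => ux t y * m t y) 0 L).
Proof.
intros Ht; pose proof m_cont; pose proof ux_cont.
set (A := RInt (fun y => ux t y * m t y) 0 L).
rewrite (RInt_ext _ (fun x => / 2 * (b + c * A) * m t x + - / 2 * (ux t x * m t x)))
  by (intros; unfold Gfun; fold A; simpl; ring).
rewrite (RInt_rect_plus T L) with (f := fun t x => / 2 * (b + c * A) * m t x)
  (g := fun t x => - / 2 * (ux t x * m t x)) by (auto; rect_continuity).
rewrite (RInt_rect_scal T L) with (f := m) by auto.
rewrite (RInt_rect_scal T L) with (f := fun t x => ux t x * m t x) by (auto; rect_continuity).
rewrite mass_conservation by auto; fold A; ring.
Qed.

(* Substituting u_x = b + c A - 2 G turns um_source into r u m + G^2 m - (b + c A) G m. *)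
Lemma G_sq_m_integral_le t : Icl T t ->
  RInt (fun x => G t x ^ 2 * m t x) 0 L <= RInt (um_source t) 0 L + b / (8 * c).
Proof.
intros Ht; pose proof m_cont; pose proof G_cont; pose proof um_source_cont.
set (A := RInt (fun y => ux t y * m t y) 0 L).
apply Rle_trans with (RInt (fun x => (b + c * A) * (G t x * m t x) + um_source t x) 0 L).
- apply (RInt_rect_le T L) with (f := fun t x => G t x ^ 2 * m t x)
    (g := fun t x => (b + c * A) * (G t x * m t x) + um_source t x); auto; try rect_continuity.
  intros x Hx; unfold um_source.
  replace (ux t x) with (b + c * A - 2 * G t x) by (unfold Gfun, A; field).
  pose proof (Rmult_le_pos _ _ (Rlt_le _ _ Hr)
    (Rmult_le_pos _ _ (u_nonneg t x Ht Hx) (m_nonneg t x Ht Hx))).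
  lra.
- rewrite (RInt_rect_plus T L) with (f := fun t x => (b + c * A) * (G t x * m t x)) (g := um_source)
    by (auto; rect_continuity).
  rewrite (RInt_rect_scal T L) with (f := fun t x => G t x * m t x) by (auto; rect_continuity).
  rewrite G_m_integral by auto; fold A.
  pose proof (duality_quadratic_bound b c A Hbc Hc (Rlt_le _ _ Hb)); lra.
Qed.

Lemma duality_estimate MT : (forall x, Icl L x -> uT x <= MT) ->
  RInt (fun t => RInt (fun x => G t x ^ 2 * m t x) 0 L) 0 T <= MT + T * (b / (8 * c)).
Proof.
intros HMT; pose proof u_cont; pose proof m_cont; pose proof G_cont; pose proof um_source_cont.
assert (HT0 : Icl T 0) by (unfold Icl; lra).
assert (HTT : Icl T T) by (unfold Icl; lra).
assert (Hfinal : RInt (fun x => u T x * m T x) 0 L <= MT).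
{ apply Rle_trans with (RInt (fun x => MT * m T x) 0 L).
  - apply (RInt_rect_le T L) with (f := fun t x => u t x * m t x) (g := fun t x => MT * m t x);
      auto; try rect_continuity.
    intros x Hx; rewrite (proj2 (Init x Hx)).
    apply Rmult_le_compat_r; [apply m_nonneg | apply HMT]; auto.
  - rewrite (RInt_rect_scal T L) with (f := m) by auto.
    rewrite mass_conservation by auto; lra. }
assert (Hinit : 0 <= RInt (fun x => u 0 x * m 0 x) 0 L).
{ apply RInt_ge_0; [lra | apply (ex_RInt_rect T L) with (f := fun t x => u t x * m t x);
    unfold Icl; auto; try lra; rect_continuity |].
  intros x Hx; apply Rmult_le_pos; [apply u_nonneg | apply m_nonneg]; unfold Icl; lra. }
apply Rle_trans with (RInt (fun t => RInt (um_source t) 0 L + b / (8 * c)) 0 T).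
- apply RInt_le; [lra | apply (ex_RInt_iter T L); auto; rect_continuity | |].
  + apply (ex_RInt_plus (V := R_NormedModule)); [apply (ex_RInt_iter T L); auto | apply ex_RInt_const].
  + intros t Ht; apply G_sq_m_integral_le; unfold Icl; lra.
- rewrite (RInt_plus (V := R_CompleteNormedModule) (fun t => RInt (um_source t) 0 L)
    (fun _ => b / (8 * c))); [| apply (ex_RInt_iter T L); auto | apply ex_RInt_const].
  change (RInt (fun t => RInt (um_source t) 0 L) 0 T + RInt (fun _ => b / (8 * c)) 0 T
    <= MT + T * (b / (8 * c))).
  pose proof um_balance; rewrite RInt_const_R; lra.
Qed.

Lemma continuous_rect_comp_m (p : R -> R) : (forall s, 0 <= s -> continuity_pt p s) ->
  continuous_rect T L (fun t x => p (m t x)).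
Proof.
intros Hp; apply continuous_rect_comp; auto; [|apply m_cont].
intros t x Ht Hx; apply Hp, m_nonneg; auto.
Qed.

Lemma Psi_m_cont : continuous_rect T L (fun t x => Psi (m t x)).
Proof.
apply continuous_rect_comp_m; intros s Hs.
eapply is_derive_continuity_pt, Psi_is_derive; lra.
Qed.

Lemma ln_m_cont : continuous_rect T L (fun t x => ln (m t x + 1)).
Proof.
apply (continuous_rect_comp_m (fun y => ln (y + 1))); intros s Hs.
eapply is_derive_continuity_pt, ln_shift_is_derive; lra.
Qed.

Lemma inv_m_cont : continuous_rect T L (fun t x => / (m t x + 1)).
Proof.
apply (continuous_rect_comp_m (fun y => / (y + 1))); intros s Hs.
apply inv_shift_continuity_pt; lra.
Qed.

Lemma entropy_balance :
  RInt (fun x => Psi (m T x)) 0 L - RInt (fun x => Psi (m 0 x)) 0 L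
  = RInt (fun t => RInt (fun x => - (/ (m t x + 1) * mx t x) * flux t x) 0 L) 0 T.
Proof.
pose proof mx_cont; pose proof flux_cont; pose proof Psi_m_cont; pose proof ln_m_cont;
  pose proof inv_m_cont.
assert (Hm : forall s x, Iop T s -> Iop L x -> -1 < m s x).
{ intros s x Hs Hx; pose proof (m_nonneg s x (Iop_Icl _ _ Hs) (Iop_Icl _ _ Hx)); lra. }
apply (balance T L (fun t x => Psi (m t x)) (fun t x => ln (m t x + 1) * mt t x)
  (fun t x => ln (m t x + 1) * flux t x)); auto; unfold Icl; try lra; try rect_continuity.
- intros; interior_continuity T L.
- intros s x Hs Hx; apply (is_derive_Rcomp Psi (fun s => m s x));
    [apply Psi_is_derive; auto | apply (Dt s x Hs Hx)].
- intros s x Hs Hx.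
  apply is_derive_eq with (/ (m s x + 1) * mx s x * flux s x + ln (m s x + 1) * mt s x); [|ring].
  apply (is_derive_Rmult (fun y => ln (m s y + 1)) (fun y => flux s y));
    [|apply flux_is_derive; auto].
  apply (is_derive_Rcomp (fun y => ln (y + 1)) (fun y => m s y));
    [apply ln_shift_is_derive; auto | apply (Dx s x); auto; apply Iop_Icl, Hs].
- intros s Hs; destruct (flux_boundary s Hs) as [-> ->]; split; ring.
Qed.

Lemma entropy_estimate MT : (forall x, Icl L x -> uT x <= MT) -> sigma <= 1 ->
  sigma ^ 4 / 4 * RInt (fun t => RInt (fun x => mx t x ^ 2 / (m t x + 1)) 0 L) 0 T
  <= Rabs (RInt (fun x => Psi (m0 x)) 0 L) + (MT + T * (b / (8 * c))).
Proof.
intros HMT Hs1.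
pose proof m_cont; pose proof mx_cont; pose proof G_cont; pose proof flux_cont;
  pose proof Psi_m_cont; pose proof inv_m_cont.
assert (HT0 : Icl T 0) by (unfold Icl; lra).
assert (HTT : Icl T T) by (unfold Icl; lra).
set (P0 := RInt (fun x => Psi (m0 x)) 0 L).
assert (HP0 : RInt (fun x => Psi (m 0 x)) 0 L = P0).
{ apply RInt_ext; intros x Hx; apply Icl_of_Rmin_Rmax in Hx; [|lra].
  rewrite (proj1 (Init x Hx)); reflexivity. }
assert (HPT : 0 <= RInt (fun x => Psi (m T x)) 0 L).
{ apply RInt_ge_0; [lra | apply (ex_RInt_rect T L) with (f := fun t x => Psi (m t x));
    unfold Icl; auto; lra |].
  intros x Hx; apply Psi_nonneg, m_nonneg; unfold Icl; lra. }
assert (Hsig2 : 0 < sigma ^ 2 <= 1)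
  by (split; [apply pow_lt; lra | rewrite <- (pow1 2); apply pow_incr; lra]).
pose proof (duality_estimate MT HMT) as D.
pose proof entropy_balance as B; rewrite HP0 in B.
assert (Hpt : RInt (fun t => RInt (fun x => sigma ^ 4 / 4 * (mx t x ^ 2 / (m t x + 1))) 0 L) 0 T
  <= RInt (fun t => RInt (fun x => - sigma ^ 2 * (- (/ (m t x + 1) * mx t x) * flux t x)
        + G t x ^ 2 * m t x) 0 L) 0 T).
{ apply (RInt_iter_le T L); auto; try lra; try rect_continuity.
  intros t x Ht Hx; apply entropy_dissipation_bound, m_nonneg; auto. }
rewrite (RInt_iter_scal T L) with (f := fun t x => mx t x ^ 2 / (m t x + 1)) in Hpt
  by (auto; rect_continuity).
rewrite (RInt_iter_plus T L) with
  (f := fun t x => - sigma ^ 2 * (- (/ (m t x + 1) * mx t x) * flux t x))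
  (g := fun t x => G t x ^ 2 * m t x) in Hpt by (auto; rect_continuity).
rewrite (RInt_iter_scal T L) with (f := fun t x => - (/ (m t x + 1) * mx t x) * flux t x) in Hpt
  by (auto; rect_continuity).
rewrite <- B in Hpt.
pose proof (Rle_abs P0); pose proof (Rabs_pos P0).
assert (sigma ^ 2 * P0 <= Rabs P0) by (apply Rle_trans with (sigma ^ 2 * Rabs P0); nra).
nra.
Qed.

Lemma dissipation_bound MT : (forall x, Icl L x -> uT x <= MT) -> sigma <= 1 ->
  sigma ^ 2 * sqrt (RInt (fun t => RInt (fun x => mx t x ^ 2 / (m t x + 1)) 0 L) 0 T)
  <= sqrt (4 * (Rabs (RInt (fun x => Psi (m0 x)) 0 L) + (MT + T * (b / (8 * c))))).
Proof.
intros HMT Hs1; pose proof (entropy_estimate MT HMT Hs1) as En.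
pose proof mx_cont; pose proof inv_m_cont.
set (X := RInt (fun t => RInt (fun x => mx t x ^ 2 / (m t x + 1)) 0 L) 0 T) in *.
assert (HX : 0 <= X).
{ apply Rle_trans with (RInt (fun _ => RInt (fun _ => 0) 0 L) 0 T); [rewrite RInt_iter_zero; lra|].
  apply (RInt_iter_le T L); auto; try lra; try rect_continuity.
  intros t x Ht Hx; pose proof (m_nonneg t x Ht Hx).
  apply Rmult_le_pos; [apply pow2_ge_0 | left; apply Rinv_0_lt_compat; lra]. }
assert (Hs2 : 0 <= sigma ^ 2) by (apply pow_le; lra).
rewrite <- (sqrt_square (sigma ^ 2)) at 1 by exact Hs2.
rewrite <- sqrt_mult_alt by (apply Rmult_le_pos; auto).
apply sqrt_le_1_alt; nra.
Qed.

End Solution.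

Lemma continuous_on_Icl_bounded L f : 0 < L -> continuous_on (Icl L) f ->
  exists M, forall x, Icl L x -> f x <= M.
Proof.
intros HL Hf.
assert (Hc : continuous_on (Rcl 1 L) (uncurry2 (fun _ x => f x))).
{ intros [t x] [_ Hx]; apply filterlim_locally; intros e.
  destruct (proj1 (filterlim_locally _ _) (Hf x Hx) e) as [d Hd].
  exists d; intros [t' x'] Hb [_ Hx']; apply ball_R2 in Hb; apply Hd; auto; apply Hb. }
destruct (continuous_rect_bounded 1 L Rlt_0_1 HL (fun _ x => f x)) as [M HM];
  [apply continuous_rect_of_on; auto; lra |].
exists M; intros x Hx; eapply Rle_trans; [apply Rle_abs | apply (HM 0 x); auto].
unfold Icl; lra.
Qed.

Theorem lemma4p5 :
  forall (L T r eps gamma : R) (uT uT1 uT2 m01 m02 m0 : R -> R),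
    0 < L -> 0 < T -> 0 < r -> 0 < eps -> 0 < gamma ->
    C2g L gamma uT uT1 uT2 -> C2g L gamma m0 m01 m02 ->
    uT1 0 = 0 -> uT1 L = 0 ->
    m0 0 = 0 -> m01 0 = 0 -> m0 L = 0 -> m01 L = 0 ->
    (forall x, Icl L x -> 0 <= m0 x) -> RInt m0 0 L = 1 ->
    (forall x, Icl L x -> 0 <= uT x) ->
    let b := 2 / (2 + eps) in
    let c := eps / (2 + eps) in
    exists C : R,
      forall (sigma : R) (u ut ux uxx m mt mx mxx : R -> R -> R),
        0 < sigma <= 1 ->
        classical_solution sigma r b c T L uT m0 u ut ux uxx m mt mx mxx ->
        sigma ^ 2 * sqrt (RInt (fun t => RInt (fun x => (mx t x) ^ 2 / (m t x + 1)) 0 L) 0 T)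
          <= C.
Proof.
intros L T r eps gamma uT uT1 uT2 m01 m02 m0 HL HT Hr Heps _ [CuT _] _ _ _ _ _ _ _
  Hm0 Hmass HuT b c.
destruct (continuous_on_Icl_bounded L uT HL CuT) as [MT HMT].
exists (sqrt (4 * (Rabs (RInt (fun x => Psi (m0 x)) 0 L) + (MT + T * (b / (8 * c)))))).
intros sigma u ut ux uxx m mt mx mxx [Hs0 Hs1]
  (Cu & Cm & Cux & Cmx & Cut & _ & Cmt & _ & Dx & Dt & EqU & EqM & Init & Neu & NoF).
assert (Hbc : b + c = 1) by (unfold b, c; field; lra).
assert (Hb : 0 < b) by (unfold b; apply Rdiv_lt_0_compat; lra).
assert (Hc : 0 < c) by (unfold c; apply Rdiv_lt_0_compat; lra).
apply (dissipation_bound L T r sigma b c uT m0 u ut ux uxx m mt mx mxx); auto.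
Qed.
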